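(* Let $\beta\in\mathbb{D}$ and $p\in\mathbb{D}$, and let $s=\beta+\bar\beta p$ (so that $(s,p)\in\mathbb{G}$). Then $$\kappa(s,p):=\sup_{z\in\mathbb{D}}\frac{1-|z|^2}{|1-sz+pz^2|}=\left|1-\frac{\tfrac12 s\bar\beta}{1+\sqrt{1-|\beta|^2}}\right|^{-1},$$ and the supremum is attained at exactly one point of $\mathbb{D}$, namely $z=\dfrac{\bar\beta}{1+\sqrt{1-|\beta|^2}}$.
   Context: $\mathbb{D}$ is the open unit disc and $\mathbb{G}=\{(z+w,zw):|z|<1,|w|<1\}$ is the symmetrised bidisc. (For $(s,p)\in\mathbb{G}$ one has $\beta=(s-\bar s p)/(1-|p|^2)$.) *)

(* Complex numbers: an arbitrary numClosedFieldType C
   (e.g. algC; the statement is algebraic/first-order). *)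
From HB Require Import structures.
From mathcomp Require Import all_boot all_order all_algebra.
Set Implicit Arguments. Unset Strict Implicit. Unset Printing Implicit Defensive.
Import Order.TTheory GRing.Theory Num.Theory.
Local Open Scope ring_scope.

Definition disc (C : numClosedFieldType) (z : C) : Prop := `|z| < 1.

Definition kfun (C : numClosedFieldType) (s p z : C) : C :=
  (1 - `|z| ^+ 2) / `|1 - s * z + p * z ^+ 2|.

Definition is_sup_on (C : numClosedFieldType) (P : C -> Prop) (f : C -> C) (v : C) : Prop :=
  (forall z, P z -> f z <= v) /\
  (forall w, (forall z, P z -> f z <= w) -> v <= w).

(** With [r = sqrt (1 - |beta|^2)], the quadratic [Q z = 1 - s z + p z^2]
    decomposes as [4 r (1 + r)^2 Q = U V^2 + W Y^2], where
    [V z = 1 + r - beta z] and [Y z = (1 + r) z - conj beta] are linear and the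
    constants satisfy [|W| < |U|] because [|p| < 1].  Since
    [|V|^2 - |Y|^2 = 2 r (1 + r) (1 - |z|^2)], the triangle inequality gives
    [|K| (1 - |z|^2) <= |Q z|] with [K = U / (2 (1 + r))], the slack being at
    least a positive multiple of [|Y z|^2]; so equality holds exactly at the
    root [conj beta / (1 + r)] of [Y]. *)
From HB Require Import structures.
From mathcomp Require Import all_boot all_order all_algebra.
From mathcomp Require Import ring.
Import Order.TTheory GRing.Theory Num.Theory.
Set Implicit Arguments.
Unset Strict Implicit.
Local Open Scope ring_scope.

Section Decomposition.

Variables (C : numClosedFieldType) (beta p r : C).
Hypothesis r_real : r^* = r.
Hypothesis beta_mul_conj : beta * beta^* = 1 - r ^+ 2.

Definition coefU : C := (1 + r) ^+ 2 - p * beta^* ^+ 2.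
Definition coefW : C := p * (1 + r) ^+ 2 - beta ^+ 2.
Definition formV (z : C) : C := 1 + r - beta * z.
Definition formY (z : C) : C := (1 + r) * z - beta^*.
Definition scale : C := 4%:R * r * (1 + r) ^+ 2.

Lemma scale_mul_quadratic z :
  scale * (1 - (beta + beta^* * p) * z + p * z ^+ 2) =
  coefU * formV z ^+ 2 + coefW * formY z ^+ 2.
Proof.
have -> : coefU * formV z ^+ 2 + coefW * formY z ^+ 2 =
    ((1 + r) ^+ 4 - (beta * beta^*) ^+ 2) * (1 + p * z ^+ 2)
    - 2%:R * (1 + r) * ((1 + r) ^+ 2 - beta * beta^*) * (beta + p * beta^*) * z.
  by rewrite /coefU /coefW /formV /formY; ring.
by rewrite beta_mul_conj /scale; ring.
Qed.

Lemma normV_sub_normY z :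
  `|formV z| ^+ 2 - `|formY z| ^+ 2 = 2%:R * r * (1 + r) * (1 - `|z| ^+ 2).
Proof.
rewrite !normCK /formV /formY !(rmorphB, rmorphD, rmorphM, rmorph1) /= r_real conjCK.
have -> : (1 + r - beta * z) * (1 + r - beta^* * z^*)
    - ((1 + r) * z - beta^*) * ((1 + r) * z^* - beta) =
    ((1 + r) ^+ 2 - beta * beta^*) * (1 - z * z^*) by ring.
by rewrite beta_mul_conj -normCK; ring.
Qed.

Lemma normU_sub_normW :
  `|coefU| ^+ 2 - `|coefW| ^+ 2 = (1 - `|p| ^+ 2) * scale.
Proof.
rewrite !normCK /coefU /coefW !(rmorphB, rmorphD, rmorphM, rmorphXn, rmorph1) /=.
rewrite r_real conjCK.
have -> : ((1 + r) ^+ 2 - p * beta^* ^+ 2) * ((1 + r) ^+ 2 - p^* * beta ^+ 2)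
    - (p * (1 + r) ^+ 2 - beta ^+ 2) * (p^* * (1 + r) ^+ 2 - beta^* ^+ 2) =
    (1 - p * p^*) * ((1 + r) ^+ 4 - (beta * beta^*) ^+ 2) by ring.
by rewrite beta_mul_conj /scale; ring.
Qed.

Lemma kappa_const_eq : 1 + r != 0 ->
  1 - ((beta + beta^* * p) * beta^* / 2%:R) / (1 + r) =
  coefU / (2%:R * (1 + r)).
Proof.
move=> r1_neq0; have two_neq0 : (2%:R : C) != 0 by rewrite pnatr_eq0.
have -> : coefU = 2%:R * (1 + r) - beta * beta^* - p * beta^* ^+ 2.
  by rewrite /coefU beta_mul_conj; ring.
by field.
Qed.

Lemma formY_eq0 z : 1 + r != 0 -> (formY z == 0) = (z == beta^* / (1 + r)).
Proof.
move=> r1_neq0; rewrite /formY subr_eq0.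
by apply/eqP/eqP => [<- | ->]; rewrite mulrC ?mulKf ?divfK.
Qed.

End Decomposition.

Section Extremal.

Variables (C : numClosedFieldType) (beta p : C).
Hypotheses (beta_lt1 : `|beta| < 1) (p_lt1 : `|p| < 1).

Local Notation r := (sqrtC (1 - `|beta| ^+ 2)).
Local Notation s := (beta + beta^* * p).
Local Notation K := (1 - (s * beta^* / 2%:R) / (1 + r)).
Local Notation z0 := (beta^* / (1 + r)).
Local Notation Q z := (1 - s * z + p * z ^+ 2).
Local Notation U := (coefU beta p r).
Local Notation W := (coefW beta p r).
Local Notation V := (formV beta r).
Local Notation Y := (formY beta r).
Local Notation c := (scale r).

Lemma r_gt0 : 0 < r.
Proof. by rewrite sqrtC_gt0 subr_gt0 exprn_ilt1. Qed.

Lemma r1_gt0 : 0 < 1 + r.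
Proof. by rewrite addr_gt0 ?ltr01 ?r_gt0. Qed.

Lemma r_real : r^* = r.
Proof. exact/geC0_conj/ltW/r_gt0. Qed.

Lemma beta_mul_conj : beta * beta^* = 1 - r ^+ 2.
Proof. by rewrite sqrtCK -normCK; ring. Qed.

Lemma scale_gt0 : 0 < c.
Proof. by rewrite /scale !mulr_gt0 ?exprn_gt0 ?ltr0n ?r_gt0 ?r1_gt0. Qed.

Lemma normW_lt_normU : `|W| < `|U|.
Proof.
rewrite -(@ltr_pXn2r _ 2) ?nnegrE ?normr_ge0 // -subr_gt0.
rewrite normU_sub_normW ?r_real ?beta_mul_conj // mulr_gt0 ?scale_gt0 //.
by rewrite subr_gt0 exprn_ilt1.
Qed.

Lemma normK : `|K| = `|U| / (2%:R * (1 + r)).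
Proof.
rewrite kappa_const_eq ?beta_mul_conj ?gt_eqF ?r1_gt0 // normrM normfV.
by rewrite [`|2%:R * _|]ger0_norm // mulr_ge0 ?ler0n ?ltW ?r1_gt0.
Qed.

Lemma normU_mul_normV_sub_normY (z : C) :
  `|U| * (`|V z| ^+ 2 - `|Y z| ^+ 2) = c * (`|K| * (1 - `|z| ^+ 2)).
Proof.
have r1_neq0 : 1 + r != 0 by rewrite gt_eqF ?r1_gt0.
rewrite normV_sub_normY ?r_real ?beta_mul_conj // normK /scale.
by field.
Qed.

(* The reverse triangle inequality applied to [c Q = U V^2 + W Y^2]. *)
Lemma norm_quadratic_slack (z : C) :
  c * (`|K| * (1 - `|z| ^+ 2)) + (`|U| - `|W|) * `|Y z| ^+ 2 <= c * `|Q z|.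
Proof.
rewrite -normU_mul_normV_sub_normY.
have -> : `|U| * (`|V z| ^+ 2 - `|Y z| ^+ 2) + (`|U| - `|W|) * `|Y z| ^+ 2 =
    `|U * V z ^+ 2| - `|W * Y z ^+ 2| by rewrite (normrM U) (normrM W) !normrX; ring.
rewrite -(ger0_norm (ltW scale_gt0)) -normrM.
by rewrite scale_mul_quadratic ?beta_mul_conj // lerB_normD.
Qed.

Lemma norm_quadratic_leif (z : C) :
  `|K| * (1 - `|z| ^+ 2) <= `|Q z| ?= iff (z == z0).
Proof.
have r1_neq0 : 1 + r != 0 by rewrite gt_eqF ?r1_gt0.
have c_neq0 : c != 0 by rewrite gt_eqF ?scale_gt0.
have UW_gt0 : 0 < `|U| - `|W| by rewrite subr_gt0 normW_lt_normU.
have slack := norm_quadratic_slack z.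
split.
  rewrite -(ler_pM2l scale_gt0); apply: le_trans slack.
  by rewrite lerDl mulr_ge0 ?exprn_ge0 ?(ltW UW_gt0).
rewrite -formY_eq0 //; apply/idP/idP => [/eqP eqQ | /eqP Y0].
  move: slack; rewrite eqQ -lerBrDl subrr pmulr_rle0 //.
  by rewrite -normrX normr_le0 expf_eq0.
have eq_VY := normU_mul_normV_sub_normY z.
rewrite Y0 normr0 expr0n subr0 in eq_VY.
have eq_Q := scale_mul_quadratic p beta_mul_conj z.
rewrite Y0 expr0n mulr0 addr0 in eq_Q.
apply/eqP/(mulfI c_neq0); rewrite -eq_VY -[`|V z| ^+ 2]normrX -normrM -eq_Q normrM.
by rewrite (ger0_norm (ltW scale_gt0)).
Qed.

Lemma z0_in_disc : `|z0| < 1.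
Proof.
rewrite normrM normfV norm_conjC (ger0_norm (ltW r1_gt0)) ltr_pdivrMr ?r1_gt0 //.
by rewrite mul1r (lt_le_trans beta_lt1) // lerDl ltW ?r_gt0.
Qed.

Lemma kfun_leif (z : C) : `|z| < 1 ->
  kfun s p z <= `|K|^-1 ?= iff (z == z0).
Proof.
move=> z_lt1; have [le_KQ eq_KQ] := norm_quadratic_leif z.
have d_gt0 : 0 < 1 - `|z| ^+ 2 by rewrite subr_gt0 exprn_ilt1.
have K_gt0 : 0 < `|K|.
  by rewrite normK divr_gt0 ?mulr_gt0 ?ltr0n ?r1_gt0 // (le_lt_trans _ normW_lt_normU).
have Q_gt0 : 0 < `|Q z| by apply: lt_le_trans le_KQ; rewrite mulr_gt0.
have -> : kfun s p z = (`|K| * (1 - `|z| ^+ 2)) / `|Q z| / `|K|.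
  by rewrite /kfun; field; rewrite !gt_eqF.
split; first by rewrite ler_pdivrMr // mulVf ?gt_eqF // ler_pdivrMr // mul1r.
rewrite -eq_KQ -[X in _ == X]mul1r (inj_eq (mulIf (invr_neq0 (lt0r_neq0 K_gt0)))).
rewrite -[X in _ == X](divff (lt0r_neq0 Q_gt0)).
by rewrite (inj_eq (mulIf (invr_neq0 (lt0r_neq0 Q_gt0)))).
Qed.

End Extremal.

Theorem proposition4p2 (C : numClosedFieldType) (beta p : C)
    (hbeta : `|beta| < 1) (hp : `|p| < 1) :
  let s := beta + beta^* * p in
  let v := `|1 - (s * beta^* / 2%:R) / (1 + sqrtC (1 - `|beta| ^+ 2))| ^-1 in
  let z0 := beta^* / (1 + sqrtC (1 - `|beta| ^+ 2)) in
  is_sup_on (@disc C) (kfun s p) v /\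
  disc z0 /\ kfun s p z0 = v /\
  (forall z : C, disc z -> kfun s p z = v -> z = z0).
Proof.
move=> s v z0.
have z0_disc : disc z0 := z0_in_disc hbeta.
have kfun_z0 : kfun s p z0 = v.
  by apply/eqP; rewrite (kfun_leif hbeta hp z0_disc).
split; [split|split; [exact: z0_disc | split; [exact: kfun_z0 |]]].
- by move=> z /(kfun_leif hbeta hp) [].
- by move=> w bounded; rewrite -kfun_z0; exact: bounded.
- by move=> z /(kfun_leif hbeta hp) [_ eq_v] /eqP; rewrite eq_v => /eqP.
Qed.
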